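(* Let $n,m\in\mathbb N$, $d:=\min\{n,m\}$, fix $\alpha\in[1,d]$, and write $k:=\lfloor\alpha\rfloor$, $\theta:=\alpha-k\in[0,1)$. Let $\Phi:\mathbb M_n\to\mathbb M_m$ be linear. The following are equivalent: (i) $\Phi$ is $\alpha$-superpositive, i.e. $C_\Phi\in\mathsf K_\alpha$; (ii) there exist $N\in\mathbb N$ and $\alpha$-admissible matrices $A_1,\dots,A_N\in\mathbb M_{m,n}$ such that $\Phi(X)=\sum_{i=1}^N A_iXA_i^\ast$ for all $X\in\mathbb M_n$; (iii) there exist $N\in\mathbb N$, vectors $\psi_1,\dots,\psi_N\in\mathcal V_\alpha$ and scalars $t_1,\dots,t_N>0$ such that $C_\Phi=\sum_{i=1}^N t_i\psi_i\psi_i^\ast$. Moreover, in (iii) one may choose $N\le (nm)^2$. In particular, the $\alpha$-superpositive maps are precisely the completely positive maps admitting a Kraus decomposition with $\alpha$-admissible Kraus operators.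
   Context: Standard bases: $\{e_i\}$ of $\mathbb C^n$, $\{f_j\}$ of $\mathbb C^m$; $E_{ij}$ are the matrix units of $\mathbb M_n$. The Choi matrix of a linear $\Phi:\mathbb M_n\to\mathbb M_m$ is $C_\Phi=\sum_{i,j=1}^nE_{ij}\otimes\Phi(E_{ij})\in\mathbb M_n\otimes\mathbb M_m$. For $\psi=\sum_{i,j}a_{ij}e_i\otimes f_j\in\mathbb C^n\otimes\mathbb C^m$, its Schmidt coefficients $s_1(\psi)\ge\dots\ge s_d(\psi)\ge0$ are the singular values of the $n\times m$ matrix $[a_{ij}]$. For $\alpha\in[1,d]$ with $k=\lfloor\alpha\rfloor$, $\theta=\alpha-k$, $r=\lceil\alpha\rceil$: a unit vector $\psi$ is $\alpha$-admissible if $s_j(\psi)=0$ for all $j\ge r+1$ and, when $\theta>0$, $s_{k+1}(\psi)\le\frac{\theta}{k}\sum_{j=1}^ks_j(\psi)$; $\mathcal V_\alpha$ denotes the set of such unit vectors. A matrix $A\in\mathbb M_{m,n}$ with singular values $\sigma_1(A)\ge\sigma_2(A)\ge\cdots$ is $\alpha$-admissible if $\sigma_j(A)=0$ for all $j\ge r+1$ and, when $\theta>0$, $\sigma_{k+1}(A)\le\frac{\theta}{k}\sum_{j=1}^k\sigma_j(A)$. $\mathsf K_\alpha$ is the closure of the convex cone $\{\sum_i t_i\psi_i\psi_i^\ast: t_i\ge0,\psi_i\in\mathcal V_\alpha\}$ (finite sums) in $\mathbb M_n\otimes\mathbb M_m$. *)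

(* The tensor product
   M_n (x) M_m is identified with M_(n*m) via the Kronecker product  tensmx
   (mathcomp-real-closed mxtens), i.e. e_i (x) f_j  <->  index  i*m + j. *)
From HB Require Import structures.
From mathcomp Require Import all_boot all_order all_algebra.
From mathcomp Require Import reals.
From mathcomp Require Import complex mxtens.
From mathcomp Require Export spectral.
Set Implicit Arguments. Unset Strict Implicit. Unset Printing Implicit Defensive.
Import Order.TTheory GRing.Theory Num.Theory.
Local Open Scope ring_scope.
Local Open Scope complex_scope.
Local Open Scope sesquilinear_scope.

Section Defs.
Variable R : realType.
Local Notation C := R[i].

(* Singular values of A in M_(p,q), as a sequence s_0 >= s_1 >= ... >= 0
   (0-based; the paper's s_j is our s (j-1)), padded by zeros beyond
   min(p,q):  A = U D V^* with U, V unitary and D the p x q "diagonal"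
   matrix with diagonal entries s_0, ..., s_(min(p,q)-1). *)
Definition singular_values (p q : nat) (A : 'M[C]_(p, q)) (s : nat -> R) : Prop :=
  (forall i j : nat, (i <= j)%N -> s j <= s i) /\
  (forall j : nat, 0 <= s j) /\
  (forall j : nat, (minn p q <= j)%N -> s j = 0) /\
  exists (U : 'M[C]_p) (V : 'M[C]_q),
    U \is unitarymx /\ V \is unitarymx /\
    A = U *m (\matrix_(i < p, j < q) (if (i == j :> nat) then (s i)%:C else 0))
          *m V ^t*.

(* alpha-admissibility condition on a nonincreasing sequence of singular
   values / Schmidt coefficients;  k = floor alpha, theta = alpha - k,
   r = ceil alpha.  "s_j = 0 for all j >= r+1" (1-based) becomes
   "s j = 0 for all 0-based j with r <= j". *)
Definition admissible_seq (alpha : R) (s : nat -> R) : Prop :=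
  let k := Num.truncn alpha in
  let theta := alpha - k%:R in
  (forall j : nat, Num.ceil alpha <= j%:Z -> s j = 0) /\
  (0 < theta -> s k <= theta / k%:R * \sum_(j < k) s j).

Definition admissible_mx (alpha : R) (p q : nat) (A : 'M[C]_(p, q)) : Prop :=
  exists s, singular_values A s /\ admissible_seq alpha s.

Definition coef_mx (n m : nat) (psi : 'cV[C]_(n * m)) : 'M[C]_(n, m) :=
  \matrix_(i < n, j < m) psi (mxtens_index (i, j)) 0.

Definition schmidt_coefs (n m : nat) (psi : 'cV[C]_(n * m)) (s : nat -> R) :=
  singular_values (coef_mx psi) s.

Definition unit_vector (N : nat) (psi : 'cV[C]_N) : Prop :=
  (psi ^t* *m psi) 0 0 = 1.

Definition V_alpha (alpha : R) (n m : nat) (psi : 'cV[C]_(n * m)) : Prop :=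
  unit_vector psi /\
  exists s, schmidt_coefs psi s /\ admissible_seq alpha s.

Definition cone_alpha (alpha : R) (n m : nat) (X : 'M[C]_(n * m)) : Prop :=
  exists (N : nat) (t : 'I_N -> R) (psi : 'I_N -> 'cV[C]_(n * m)),
    (forall i, 0 <= t i) /\ (forall i, V_alpha alpha (psi i)) /\
    X = \sum_(i < N) (t i)%:C *: (psi i *m (psi i) ^t*).

(* K_alpha : topological closure of cone_alpha in M_(n*m)(C)
   (finite-dimensional, so any norm; we use the entrywise max-norm). *)
Definition K_alpha (alpha : R) (n m : nat) (X : 'M[C]_(n * m)) : Prop :=
  forall eps : R, 0 < eps ->
    exists Y : 'M[C]_(n * m), cone_alpha alpha Y /\
      forall i j, `|X i j - Y i j| < eps%:C.

Definition choi (n m : nat) (Phi : 'M[C]_n -> 'M[C]_m) : 'M[C]_(n * m) :=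
  \sum_(i < n) \sum_(j < n) tensmx (delta_mx i j) (Phi (delta_mx i j)).

End Defs.

From HB Require Import structures.
From mathcomp Require Import all_boot all_order all_algebra.
From mathcomp Require Import reals.
From mathcomp Require Import complex mxtens spectral.
From mathcomp Require Import all_classical topology normedtype.
From mathcomp Require Import lra.
Import Order.TTheory GRing.Theory Num.Theory.
Import numFieldTopology.Exports numFieldNormedType.Exports.
Local Open Scope ring_scope.
Local Open Scope complex_scope.
Local Open Scope sesquilinear_scope.
Set Implicit Arguments. Unset Strict Implicit. Unset Printing Implicit Defensive.

(* A Kraus operator [A] and the vector [psi] with coefficient matrix [A^T] carry the same
   data: [C_Phi] is the sum of the [psi psi^*], and [A^T] has the singular values of [A],
   so (ii) and (iii) are equivalent after normalizing each [psi]; (iii) trivially gives (i).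
   For (i) => (iii) the cone is shown to be closed. By Caratheodory's theorem in the
   [(nm)^2]-dimensional real space of hermitian matrices, every cone element is a
   combination of exactly [(nm)^2] terms [t psi psi^*], whose weights are bounded by the
   trace. Writing each [psi] as [U diag(s) V^*], such combinations are parametrized by a
   compact set of real coordinates (unitarity and admissibility are closed conditions) on
   which the combination is continuous, so a cluster point of parameters of approximants of
   [C_Phi] represents [C_Phi] itself; dropping zero weights makes them positive. *)

Section KrausChoi.
Variable R : realType.
Local Notation C := R[i].

Lemma choiE n m (Phi : 'M[C]_n -> 'M[C]_m) i a j b :
  choi Phi (mxtens_index (i, a)) (mxtens_index (j, b)) = Phi (delta_mx i j) a b.
Proof.
rewrite /choi summxE.
under eq_bigr => i' _ do (rewrite summxE; under eq_bigr => j' _ do rewrite tensmxE mxE).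
rewrite pair_bigA (bigD1 (i, j)) //= big1 => [|[i' j'] /= ne]; last first.
  move: ne; rewrite xpair_eqE negb_and => /orP[] /negbTE ne;
  by rewrite [i == i']eq_sym [j == j']eq_sym ne ?andbF mul0r.
by rewrite !eqxx mul1r addr0.
Qed.

Lemma outer_mxE K (u v : 'cV[C]_K) a b : (u *m v^t*) a b = u a 0 * (v b 0)^*%R.
Proof. by rewrite !mxE big_ord1 !mxE. Qed.

Lemma conjugate_delta_mxE n m (A : 'M[C]_(m, n)) i j a b :
  (A *m delta_mx i j *m A^t*) a b = A a i * (A b j)^*%R.
Proof.
rewrite -(mul_delta_mx (0 : 'I_1)) mulmxA -colE -mulmxA -rowE.
by rewrite !mxE big_ord1 !mxE.
Qed.

Lemma linear_delta_expand n m (Phi : {linear 'M[C]_n -> 'M[C]_m}) X :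
  Phi X = \sum_i \sum_j X i j *: Phi (delta_mx i j).
Proof.
rewrite {1}[X]matrix_sum_delta linear_sum; apply: eq_bigr => i _.
by rewrite linear_sum; apply: eq_bigr => j _; rewrite linearZ.
Qed.

Lemma kraus_delta_expand n m N (A : 'I_N -> 'M[C]_(m, n)) X :
  \sum_(l < N) A l *m X *m (A l)^t* =
  \sum_i \sum_j X i j *: \sum_(l < N) A l *m delta_mx i j *m (A l)^t*.
Proof.
rewrite {1}[X]matrix_sum_delta.
under eq_bigr => l _ do rewrite mulmx_sumr mulmx_suml.
rewrite exchange_big; apply: eq_bigr => i _.
under eq_bigr => l _ do rewrite mulmx_sumr mulmx_suml.
rewrite exchange_big; apply: eq_bigr => j _.
rewrite scaler_sumr; apply: eq_bigr => l _.
by rewrite -scalemxAr -scalemxAl.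
Qed.

Definition coef_vec n m (M : 'M[C]_(n, m)) : 'cV[C]_(n * m) :=
  \col_k M (mxtens_unindex k).1 (mxtens_unindex k).2.

Lemma coef_vecE n m (M : 'M[C]_(n, m)) i a : coef_vec M (mxtens_index (i, a)) 0 = M i a.
Proof. by rewrite mxE mxtens_indexK. Qed.

Lemma coef_mx_vec n m (M : 'M[C]_(n, m)) : coef_mx (coef_vec M) = M.
Proof. by apply/matrixP => i a; rewrite !mxE mxtens_indexK. Qed.

Lemma coef_vec_mx n m (psi : 'cV[C]_(n * m)) : coef_vec (coef_mx psi) = psi.
Proof.
by apply/matrixP => k j; rewrite (ord1 j) !mxE -surjective_pairing mxtens_unindexK.
Qed.

Lemma coef_mxZ n m c (psi : 'cV[C]_(n * m)) : coef_mx (c *: psi) = c *: coef_mx psi.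
Proof. by apply/matrixP => i a; rewrite !mxE. Qed.

Lemma choi_kraus n m (Phi : 'M[C]_n -> 'M[C]_m) N (A : 'I_N -> 'M[C]_(m, n)) :
  (forall X, Phi X = \sum_(l < N) A l *m X *m (A l)^t*) ->
  choi Phi = \sum_(l < N) coef_vec (A l)^T *m (coef_vec (A l)^T)^t*.
Proof.
move=> PhiE; apply/matrixP => k1 k2.
rewrite -[k1]mxtens_unindexK -[k2]mxtens_unindexK.
case: (mxtens_unindex k1) => i a; case: (mxtens_unindex k2) => j b.
rewrite choiE PhiE !summxE; apply: eq_bigr => l _.
by rewrite conjugate_delta_mxE outer_mxE !coef_vecE !mxE.
Qed.

End KrausChoi.

Section SingularValues.
Variable R : realType.
Local Notation C := R[i].

Definition sv_diag p q (s : nat -> R) : 'M[C]_(p, q) :=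
  \matrix_(i < p, j < q) (if (i == j :> nat) then (s i)%:C else 0).

Lemma singular_valuesP p q (A : 'M[C]_(p, q)) s : singular_values A s <->
  [/\ (forall i j : nat, (i <= j)%N -> s j <= s i),
      (forall j : nat, 0 <= s j),
      (forall j : nat, (minn p q <= j)%N -> s j = 0) &
      exists U V, [/\ U \is unitarymx, V \is unitarymx & A = U *m sv_diag p q s *m V^t*]].
Proof.
split; first by case=> s_dec [s_ge0 [s_eq0 [U [V [? [? ?]]]]]]; split=> //; exists U, V.
by case=> s_dec s_ge0 s_eq0 [U [V [? ? ?]]]; do 3 split=> //; exists U, V.
Qed.

Lemma singular_values_tr p q (A : 'M[C]_(p, q)) s :
  singular_values A s -> singular_values A^T s.
Proof.
move/singular_valuesP=> [s_dec s_ge0 s_eq0 [U [V [hU hV ->]]]].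
apply/singular_valuesP; split=> // [j|]; first by rewrite minnC; apply: s_eq0.
exists (V ^ Num.conj), (U ^ Num.conj); rewrite !conjC_unitary; split=> //.
rewrite !trmx_mul mulmxA; congr (_ *m _ *m _).
- by apply/matrixP => x y; rewrite !mxE.
- by apply/matrixP => x y; rewrite !mxE eq_sym; case: eqP => // ->.
- by apply/matrixP => x y; rewrite !mxE conjCK.
Qed.

Lemma singular_valuesZ p q (A : 'M[C]_(p, q)) s c : 0 <= c ->
  singular_values A s -> singular_values (c%:C *: A) (fun j => c * s j).
Proof.
move=> c_ge0 /singular_valuesP[s_dec s_ge0 s_eq0 [U [V [hU hV ->]]]].
apply/singular_valuesP; split=> [i j ij|j|j hj|]; first by rewrite ler_wpM2l // s_dec.
- by rewrite mulr_ge0.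
- by rewrite s_eq0 // mulr0.
exists U, V; split=> //; rewrite scalemxAl scalemxAr; congr (_ *m _ *m _).
by apply/matrixP => x y; rewrite !mxE; case: ifP; rewrite ?mulr0 ?rmorphM.
Qed.

Lemma admissible_seqZ alpha (s : nat -> R) c : 0 < c ->
  admissible_seq alpha s -> admissible_seq alpha (fun j => c * s j).
Proof.
move=> c_gt0 [s_eq0 s_le]; split=> [j /s_eq0 ->|/s_le]; first by rewrite mulr0.
by rewrite -mulr_sumr mulrCA ler_pM2l.
Qed.

End SingularValues.

Section UnitVectors.
Variable R : realType.
Local Notation C := R[i].

Definition vnorm2 K (u : 'cV[C]_K) : C := (u^t* *m u) 0 0.

Lemma vnorm2E K (u : 'cV[C]_K) : vnorm2 u = \sum_k u k 0 * (u k 0)^*%R.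
Proof. by rewrite /vnorm2 mxE; apply: eq_bigr => k _; rewrite !mxE mulrC. Qed.

Lemma vnorm2_ge0 K (u : 'cV[C]_K) : 0 <= vnorm2 u.
Proof. by rewrite vnorm2E sumr_ge0 // => k _; rewrite mul_conjC_ge0. Qed.

Lemma vnorm2_eq0 K (u : 'cV[C]_K) : vnorm2 u = 0 -> u = 0.
Proof.
rewrite vnorm2E => /(psumr_eq0P (fun k _ => mul_conjC_ge0 (u k 0))) u0.
by apply/matrixP => k j; rewrite (ord1 j) mxE; apply/eqP; rewrite -mul_conjC_eq0 u0.
Qed.

Lemma vnorm2_entry_le1 K (u : 'cV[C]_K) : vnorm2 u = 1 -> forall k, `|u k 0| <= 1.
Proof.
rewrite vnorm2E => u1 k; rewrite -(@expr_le1 _ 2) // normCK -u1.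
by rewrite (bigD1 k) //= lerDl sumr_ge0 // => j _; apply: mul_conjC_ge0.
Qed.

Lemma conjC_real (c : R) : (c%:C)^*%R = c%:C :> C.
Proof. exact: conjc_real. Qed.

Lemma trmxC_scale_real p q (c : R) (A : 'M[C]_(p, q)) : (c%:C *: A)^t* = c%:C *: A^t*.
Proof. by apply/matrixP => a b; rewrite !mxE rmorphM /= conjC_real. Qed.

Lemma outer_normalize K (u : 'cV[C]_K) : u != 0 -> exists r : R, [/\ 0 < r,
  unit_vector ((r^-1)%:C *: u) &
  u *m u^t* = (r ^+ 2)%:C *: (((r^-1)%:C *: u) *m ((r^-1)%:C *: u)^t*)].
Proof.
move=> u_neq0.
have /andP[/eqP /= ImE ReE] : (complex.Im (vnorm2 u) == 0) && (0 <= complex.Re (vnorm2 u)).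
  by have := vnorm2_ge0 u; rewrite lecE eq_sym.
have normE : vnorm2 u = (complex.Re (vnorm2 u))%:C.
  by apply/eqP; rewrite eq_complex /= ImE !eqxx.
have Re_gt0 : 0 < complex.Re (vnorm2 u).
  rewrite lt_def ReE andbT; apply: contra u_neq0 => /eqP Re0.
  by apply/eqP/vnorm2_eq0; rewrite normE Re0.
pose r := Num.sqrt (complex.Re (vnorm2 u)).
have r_gt0 : 0 < r by rewrite sqrtr_gt0.
have r2E : r ^+ 2 = complex.Re (vnorm2 u) by rewrite sqr_sqrtr // ltW.
exists r; split=> //; rewrite ?/unit_vector trmxC_scale_real -scalemxAl -scalemxAr scalerA.
  by rewrite [X in X = 1]mxE -/(vnorm2 u) normE -!rmorphM /= -expr2 exprVn r2E mulVf ?gt_eqF.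
rewrite -!rmorphM scalerA -rmorphM /= -mulrA -expr2 exprVn mulfV ?scale1r //.
by rewrite expf_neq0 // gt_eqF.
Qed.

Lemma unitarymx1 p : (1%:M : 'M[C]_p) \is unitarymx.
Proof. by apply/unitarymxP; rewrite mul1mx trmx1 map_mx1. Qed.

Lemma V_alpha_basis n m (alpha : R) (n_gt0 : (0 < n)%N) (m_gt0 : (0 < m)%N) :
  1 <= alpha ->
  V_alpha alpha (delta_mx (mxtens_index (Ordinal n_gt0, Ordinal m_gt0)) 0 : 'cV[C]_(n * m)).
Proof.
move=> alpha_ge1; set e := mxtens_index _; split.
  rewrite /unit_vector -/(vnorm2 _) vnorm2E (bigD1 e) //= big1 => [|k /negbTE ke].
    by rewrite mxE !eqxx mul1r rmorph1 addr0.
  by rewrite mxE ke mul0r.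
pose s (j : nat) : R := (j == 0%N)%:R.
have d_gt0 : (0 < minn n m)%N by rewrite leq_min n_gt0 m_gt0.
exists s; split.
  apply/singular_valuesP; split=> [i j|j|j|].
  - by case: j => [|j]; case: i => [|i] //=; rewrite ?lexx ?ler0n.
  - exact: ler0n.
  - by case: j => // /[!leqn0] /eqP d0; rewrite d0 in d_gt0.
  exists 1%:M, 1%:M; split; [exact: unitarymx1 | exact: unitarymx1|].
  rewrite mul1mx trmx1 map_mx1 mulmx1; apply/matrixP => i a; rewrite !mxE.
  rewrite (inj_eq (can_inj (@mxtens_indexK _ _))) xpair_eqE.
  rewrite -[i == _]val_eqE -[a == _]val_eqE /= eqxx andbT.
  by case: i a => [[|i] ?] [[|a] ?]; rewrite /s /= ?andbF ?rmorph0 ?rmorph1 ?if_same.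
split=> [[|j]|theta_gt0]; rewrite /s //.
  by rewrite ceil_le0 leNgt (lt_le_trans ltr01 alpha_ge1).
have k_gt0 : (0 < Num.truncn alpha)%N by rewrite truncn_gt0.
by rewrite eqn0Ngt k_gt0 mulr_ge0 ?divr_ge0 ?ler0n ?(ltW theta_gt0) ?sumr_ge0.
Qed.

End UnitVectors.

Section OuterCombinations.
Variable R : realType.
Local Notation C := R[i].

Lemma Re_sum I (r : seq I) (P : pred I) (F : I -> C) :
  complex.Re (\sum_(i <- r | P i) F i) = \sum_(i <- r | P i) complex.Re (F i).
Proof. exact: (raddf_sum (@complex.Re R : Rcomplex R -> R)). Qed.

Lemma Im_sum I (r : seq I) (P : pred I) (F : I -> C) :
  complex.Im (\sum_(i <- r | P i) F i) = \sum_(i <- r | P i) complex.Im (F i).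
Proof. exact: (raddf_sum (@complex.Im R : Rcomplex R -> R)). Qed.

Lemma Re_sub (x y : C) : complex.Re (x - y) = complex.Re x - complex.Re y.
Proof. exact: (raddfB (@complex.Re R : Rcomplex R -> R)). Qed.

Lemma Re_realM (c : R) (z : C) : complex.Re (c%:C * z) = c * complex.Re z.
Proof. by case: z => a b /=; rewrite mul0r subr0. Qed.

Lemma Im_realM (c : R) (z : C) : complex.Im (c%:C * z) = c * complex.Im z.
Proof. by case: z => a b /=; rewrite mul0r addr0. Qed.

Definition outer_comb K N (t : 'I_N -> R) (psi : 'I_N -> 'cV[C]_K) : 'M[C]_K :=
  \sum_(l < N) (t l)%:C *: (psi l *m (psi l)^t*).

Lemma outer_comb_hermitian K N (t : 'I_N -> R) (psi : 'I_N -> 'cV[C]_K) a b :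
  outer_comb t psi a b = (outer_comb t psi b a)^*%R.
Proof.
rewrite !summxE rmorph_sum; apply: eq_bigr => l _.
by rewrite !mxE !big_ord1 !mxE !rmorphM /= conjCK conjC_real [_ * psi l a 0]mulrC.
Qed.

Lemma outer_comb_drop K N (t : 'I_N.+1 -> R) (psi : 'I_N.+1 -> 'cV[C]_K) l0 :
  t l0 = 0 -> outer_comb t psi = outer_comb (t \o lift l0) (psi \o lift l0).
Proof. by move=> t0; rewrite /outer_comb (bigD1_ord l0) //= t0 scale0r add0r. Qed.

Lemma outer_comb_pos K (Q : 'cV[C]_K -> Prop) N (t : 'I_N -> R) psi :
  (forall l, 0 <= t l) -> (forall l, Q (psi l)) ->
  exists N' (t' : 'I_N' -> R) (psi' : 'I_N' -> 'cV[C]_K),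
    [/\ (N' <= N)%N, (forall l, 0 < t' l), (forall l, Q (psi' l)) &
        outer_comb t psi = outer_comb t' psi'].
Proof.
elim: N t psi => [|N IH] t psi t_ge0 Qpsi; first by exists 0%N, t, psi; split=> // -[].
have [l0 /eqP t0 | t_neq0] := pickP (fun l => t l == 0); last first.
  by exists N.+1, t, psi; split=> // l; rewrite lt_def t_ge0 t_neq0.
have [N' [t' [psi' [le_N' t'_gt0 Qpsi' E]]]] :=
  IH (t \o lift l0) (psi \o lift l0) (fun j => t_ge0 _) (fun j => Qpsi _).
by exists N', t', psi'; split=> //; [exact: leqW | rewrite (outer_comb_drop _ t0)].
Qed.

Lemma outer_comb_widen K (Q : 'cV[C]_K -> Prop) N N' (t : 'I_N -> R) psi psi0 :
  (N <= N')%N -> Q psi0 -> (forall l, 0 <= t l) -> (forall l, Q (psi l)) ->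
  exists (t' : 'I_N' -> R) (psi' : 'I_N' -> 'cV[C]_K),
    [/\ forall l, 0 <= t' l, forall l, Q (psi' l) & outer_comb t psi = outer_comb t' psi'].
Proof.
move=> le_N Qpsi0 t_ge0 Qpsi.
pose t' (l : 'I_N') : R := oapp t 0 (insub (val l) : option 'I_N).
pose psi' (l : 'I_N') := oapp psi psi0 (insub (val l) : option 'I_N).
exists t', psi'; split=> [l|l|]; rewrite /t' /psi'; try by case: insubP => [j _ _|_] /=.
pose F (i : nat) : 'M[C]_K :=
  if insub i is Some l then (t l)%:C *: (psi l *m (psi l)^t*) else 0.
transitivity (\sum_(i < N) F i); first by apply: eq_bigr => i _; rewrite /F valK.
rewrite (big_ord_widen _ _ le_N) big_mkcond; apply: eq_bigr => l _.
by rewrite /F; case: insubP => [j -> _|/negbTE ->] //=; rewrite rmorph0 scale0r.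
Qed.

End OuterCombinations.

Section Caratheodory.
Variable R : realType.
Local Notation C := R[i].

(* These [K * K] real coordinates determine a hermitian [M]; this is the dimension count
   of Caratheodory's theorem below. *)
Definition herm_coords K (M : 'M[C]_K) : 'rV[R]_(K * K) :=
  \row_k let: (a, b) := mxtens_unindex k in
         if (a <= b)%N then complex.Re (M a b) else complex.Im (M b a).

Lemma herm_coordsE K (M : 'M[C]_K) a b : herm_coords M 0 (mxtens_index (a, b)) =
  if (a <= b)%N then complex.Re (M a b) else complex.Im (M b a).
Proof. by rewrite mxE mxtens_indexK. Qed.

Lemma herm_coords_outer_comb K N (c : 'I_N -> R) (psi : 'I_N -> 'cV[C]_K) :
  herm_coords (outer_comb c psi) = \sum_l c l *: herm_coords (psi l *m (psi l)^t*).
Proof.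
apply/rowP => k; rewrite -[k]mxtens_unindexK; case: (mxtens_unindex k) => a b.
rewrite summxE herm_coordsE; under eq_bigr => l _ do rewrite mxE herm_coordsE.
by case: ifP => _; rewrite summxE ?Re_sum ?Im_sum;
  apply: eq_bigr => l _; rewrite mxE ?Re_realM ?Im_realM.
Qed.

Lemma hermitian_herm_coords_eq0 K (M : 'M[C]_K) :
  (forall a b, M a b = (M b a)^*%R) -> herm_coords M = 0 -> M = 0.
Proof.
move=> M_herm M0.
have coordE (a b : 'I_K) : herm_coords M 0 (mxtens_index (a, b)) = 0 by rewrite M0 mxE.
have upper (a b : 'I_K) : (a <= b)%N -> M a b = 0.
  move=> le_ab; apply/eqP; rewrite eq_complex /=.
  have := coordE a b; rewrite herm_coordsE le_ab => ->; rewrite eqxx /=.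
  case: ltngtP le_ab => // [lt_ab _|/val_inj eq_ab _].
    by have := coordE b a; rewrite herm_coordsE leqNgt lt_ab /= => ->.
  subst b; have /(congr1 (@complex.Im R)) := M_herm a a.
  by case: (M a a) => x y /= /eqP; rewrite -subr_eq0 opprK -mulr2n mulrn_eq0.
apply/matrixP => a b; rewrite mxE; have [/upper //|lt_ba] := leqP a b.
by rewrite M_herm upper ?(ltnW lt_ba) // rmorph0.
Qed.

Lemma outer_comb_dependent K N (psi : 'I_N -> 'cV[C]_K) : (K * K < N)%N ->
  exists2 c : 'I_N -> R, (exists l, 0 < c l) & outer_comb c psi = 0.
Proof.
move=> lt_KN; pose B := \matrix_(l < N) herm_coords (psi l *m (psi l)^t*).
have /rowV0Pn[c /sub_kermxP cB c_neq0] : kermx B != 0.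
  by rewrite kermx_eq0 /row_free neq_ltn (leq_ltn_trans (rank_leq_col B) lt_KN).
have cBE : c *m B = \sum_l c 0 l *: herm_coords (psi l *m (psi l)^t*).
  by rewrite mulmx_sum_row; apply: eq_bigr => l _; rewrite rowK.
have comb0 (s : R) : outer_comb (fun l => s * c 0 l) psi = 0.
  apply: hermitian_herm_coords_eq0; first exact: outer_comb_hermitian.
  rewrite herm_coords_outer_comb; under eq_bigr => l _ do rewrite -scalerA.
  by rewrite -scaler_sumr -cBE cB scaler0.
have [l cl_neq0] : exists l, c 0 l != 0.
  by apply/existsP; apply: contraNT c_neq0 => /existsPn c0; apply/eqP/rowP => l;
    rewrite mxE; apply/eqP/negPn/c0.
have [cl_lt0|cl_gt0] := ltP (c 0 l) 0.
  by exists (fun l => -1 * c 0 l); [exists l; rewrite mulN1r oppr_gt0 | exact: comb0].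
exists (fun l => 1 * c 0 l); last exact: comb0.
by exists l; rewrite mul1r lt_def cl_neq0.
Qed.

Lemma outer_comb_eliminate K N (t : 'I_N -> R) (psi : 'I_N -> 'cV[C]_K) :
  (K * K < N)%N -> (forall l, 0 <= t l) ->
  exists l0 (t' : 'I_N -> R),
    [/\ forall l, 0 <= t' l, t' l0 = 0 & outer_comb t psi = outer_comb t' psi].
Proof.
move=> lt_KN t_ge0; have [c [l1 cl1_gt0] comb0] := outer_comb_dependent psi lt_KN.
pose l0 := [arg min_(l < l1 | 0 < c l) (t l / c l)]%O.
have [cl0_gt0 l0_min] : 0 < c l0 /\ forall l, 0 < c l -> t l0 / c l0 <= t l / c l.
  by rewrite /l0; case: arg_minP => // i ci_gt0 i_min; split=> // j /i_min.
pose lam := t l0 / c l0.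
exists l0, (fun l => t l - lam * c l); split=> [l||].
- rewrite subr_ge0; have [cl_gt0|cl_le0] := ltP 0 (c l); first by rewrite -ler_pdivlMr ?l0_min.
  by rewrite (le_trans _ (t_ge0 l)) // mulr_ge0_le0 // divr_ge0 // ltW.
- by rewrite /lam divfK ?subrr // gt_eqF.
- rewrite /outer_comb; under [RHS]eq_bigr => l _ do rewrite rmorphB scalerBl rmorphM -scalerA.
  by rewrite sumrB -scaler_sumr -/(outer_comb c psi) comb0 scaler0 subr0.
Qed.

Lemma outer_comb_caratheodory K (Q : 'cV[C]_K -> Prop) N (t : 'I_N -> R) psi :
  (forall l, 0 <= t l) -> (forall l, Q (psi l)) ->
  exists N' (t' : 'I_N' -> R) (psi' : 'I_N' -> 'cV[C]_K),
    [/\ (N' <= K * K)%N, (forall l, 0 <= t' l), (forall l, Q (psi' l)) &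
        outer_comb t psi = outer_comb t' psi'].
Proof.
elim/ltn_ind: N t psi => -[|N] IH t psi t_ge0 Qpsi; first by exists 0%N, t, psi.
have [le_NK|lt_KN] := leqP N.+1 (K * K); first by exists N.+1, t, psi.
have [l0 [t' [t'_ge0 t'0 ->]]] := outer_comb_eliminate psi lt_KN t_ge0.
rewrite (outer_comb_drop _ t'0).
exact: IH (t' \o lift l0) (psi \o lift l0) (fun l => t'_ge0 _) (fun l => Qpsi _).
Qed.

Lemma mxtrace_outer_comb K N (t : 'I_N -> R) (psi : 'I_N -> 'cV[C]_K) :
  (forall l, unit_vector (psi l)) -> \tr (outer_comb t psi) = (\sum_l t l)%:C.
Proof.
move=> psi1; rewrite raddf_sum rmorph_sum; apply: eq_bigr => l _ /=.
by rewrite mxtraceZ mxtrace_mulC /mxtrace big_ord1 psi1 mulr1.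
Qed.

End Caratheodory.

Section KrausRepresentations.
Variables (R : realType) (n m : nat) (alpha : R).
Local Notation C := R[i].

Lemma admissible_kraus_outer (A : 'M[C]_(m, n)) (psi0 : 'cV[C]_(n * m)) :
  V_alpha alpha psi0 -> admissible_mx alpha A ->
  exists (t : R) (psi : 'cV[C]_(n * m)),
    [/\ 0 <= t, V_alpha alpha psi & coef_vec A^T *m (coef_vec A^T)^t* = t%:C *: (psi *m psi^t*)].
Proof.
move=> psi0_V [s [sA adm_s]].
have [->|A_neq0] := eqVneq (coef_vec A^T) 0.
  by exists 0, psi0; rewrite mul0mx scale0r.
have [r [r_gt0 unit_psi ->]] := outer_normalize A_neq0.
exists (r ^+ 2), ((r^-1)%:C *: coef_vec A^T); split=> //; first exact: sqr_ge0.
split=> //; exists (fun j => r^-1 * s j); split; last by apply: admissible_seqZ; rewrite ?invr_gt0.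
rewrite /schmidt_coefs coef_mxZ coef_mx_vec.
by apply: singular_valuesZ; [rewrite invr_ge0 ltW | exact: singular_values_tr].
Qed.

Lemma kraus_choi_outer_comb (Phi : 'M[C]_n -> 'M[C]_m) N (A : 'I_N -> 'M[C]_(m, n))
    (psi0 : 'cV[C]_(n * m)) :
  V_alpha alpha psi0 -> (forall l, admissible_mx alpha (A l)) ->
  (forall X, Phi X = \sum_(l < N) A l *m X *m (A l)^t*) ->
  exists N' (psi : 'I_N' -> 'cV[C]_(n * m)) (t : 'I_N' -> R),
    [/\ forall l, V_alpha alpha (psi l), forall l, 0 < t l & choi Phi = outer_comb t psi].
Proof.
move=> psi0_V A_adm PhiE.
have [f fP] := choice (fun l => admissible_kraus_outer psi0_V (A_adm l)).
have [g gP] := choice fP.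
have f_ge0 l : 0 <= f l by case: (gP l).
have g_V l : V_alpha alpha (g l) by case: (gP l).
have [N' [t [psi [_ t_gt0 psi_V combE]]]] := outer_comb_pos f_ge0 g_V.
exists N', psi, t; split=> //; rewrite (choi_kraus PhiE) -combE.
by apply: eq_bigr => l _; case: (gP l).
Qed.

Lemma outer_comb_choi_kraus (Phi : {linear 'M[C]_n -> 'M[C]_m})
    N (psi : 'I_N -> 'cV[C]_(n * m)) (t : 'I_N -> R) :
  (forall l, V_alpha alpha (psi l)) -> (forall l, 0 < t l) -> choi Phi = outer_comb t psi ->
  exists N' (A : 'I_N' -> 'M[C]_(m, n)),
    (forall l, admissible_mx alpha (A l)) /\ forall X, Phi X = \sum_(l < N') A l *m X *m (A l)^t*.
Proof.
move=> psi_V t_gt0 choi_comb.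
exists N, (fun l => (Num.sqrt (t l))%:C *: (coef_mx (psi l))^T); split.
  move=> l; have [_ [s [s_psi adm_s]]] := psi_V l.
  exists (fun j => Num.sqrt (t l) * s j); split; last by apply: admissible_seqZ; rewrite ?sqrtr_gt0.
  by apply: singular_valuesZ; [exact: sqrtr_ge0 | exact: singular_values_tr].
move=> X; rewrite linear_delta_expand kraus_delta_expand; apply: eq_bigr => i _.
apply: eq_bigr => j _; congr (_ *: _); apply/matrixP => a b.
rewrite -choiE choi_comb !summxE; apply: eq_bigr => l _.
rewrite conjugate_delta_mxE [LHS]mxE outer_mxE !mxE rmorphM /= conjC_real.
by rewrite mulrACA -rmorphM /= -expr2 sqr_sqrtr ?ltW.
Qed.

End KrausRepresentations.

Section Continuity.
Variables (R : realType) (I : eqType).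
Local Notation C := R[i].
Local Notation P := (prod_topology (fun _ : I => R)).
Local Open Scope classical_set_scope.

Definition cont_real (g : (I -> R) -> R) := continuous (g : P -> R).

Definition cont_complex (g : (I -> R) -> C) :=
  cont_real (fun p => complex.Re (g p)) /\ cont_real (fun p => complex.Im (g p)).

Definition cont_mx a b (F : (I -> R) -> 'M[C]_(a, b)) :=
  forall i j, cont_complex (fun p => F p i j).

Lemma cont_real_proj i : cont_real (fun p => p i).
Proof. exact: (@proj_continuous I (fun _ => R) i). Qed.

Lemma cont_real_cst c : cont_real (fun _ => c).
Proof. exact: cst_continuous. Qed.

Lemma cont_realD g h : cont_real g -> cont_real h -> cont_real (fun p => g p + h p).
Proof. by move=> g_cont h_cont x; exact: (cvgD (g_cont x) (h_cont x)). Qed.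

Lemma cont_realN g : cont_real g -> cont_real (fun p => - g p).
Proof. by move=> g_cont x; exact: (cvgN (g_cont x)). Qed.

Lemma cont_realM g h : cont_real g -> cont_real h -> cont_real (fun p => g p * h p).
Proof. by move=> g_cont h_cont x; exact: (cvgM (g_cont x) (h_cont x)). Qed.

Lemma cont_real_ext g h : g =1 h -> cont_real g -> cont_real h.
Proof. by move=> /funext ->. Qed.

Lemma cont_real_sum J (r : seq J) (Q : pred J) (F : J -> (I -> R) -> R) :
  (forall j, cont_real (F j)) -> cont_real (fun p => \sum_(j <- r | Q j) F j p).
Proof.
move=> F_cont; elim: r => [|j r IH].
  by apply: (cont_real_ext (g := fun _ => 0)) => [p|]; [rewrite big_nil | apply: cont_real_cst].
apply: (cont_real_ext (g := fun p => (if Q j then F j p else 0) + \sum_(i <- r | Q i) F i p)).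
  by move=> p; rewrite big_cons; case: (Q j); rewrite ?add0r.
by apply: cont_realD => //; case: (Q j) => //; apply: cont_real_cst.
Qed.

Lemma cont_complex_ext g h : g =1 h -> cont_complex g -> cont_complex h.
Proof. by move=> /funext ->. Qed.

Lemma cont_complex_pair g h :
  cont_real g -> cont_real h -> cont_complex (fun p => Complex (g p) (h p)).
Proof. by []. Qed.

Lemma cont_complex_real g : cont_real g -> cont_complex (fun p => (g p)%:C).
Proof. by split=> //; apply: cont_real_cst. Qed.

Lemma cont_complex_cst c : cont_complex (fun _ => c).
Proof. by split; apply: cont_real_cst. Qed.

Lemma cont_complexD g h :
  cont_complex g -> cont_complex h -> cont_complex (fun p => g p + h p).
Proof.
move=> [g1 g2] [h1 h2]; split.
  apply: (cont_real_ext (g := fun p => complex.Re (g p) + complex.Re (h p))).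
    by move=> p; case: (g p); case: (h p).
  exact: cont_realD.
apply: (cont_real_ext (g := fun p => complex.Im (g p) + complex.Im (h p))).
  by move=> p; case: (g p); case: (h p).
exact: cont_realD.
Qed.

Lemma cont_complexM g h :
  cont_complex g -> cont_complex h -> cont_complex (fun p => g p * h p).
Proof.
move=> [g1 g2] [h1 h2]; split.
  apply: (cont_real_ext (g := fun p => complex.Re (g p) * complex.Re (h p) -
    complex.Im (g p) * complex.Im (h p))); first by move=> p; case: (g p); case: (h p).
  by apply: cont_realD; [|apply: cont_realN]; apply: cont_realM.
apply: (cont_real_ext (g := fun p => complex.Re (g p) * complex.Im (h p) +
  complex.Im (g p) * complex.Re (h p))); first by move=> p; case: (g p); case: (h p).
by apply: cont_realD; apply: cont_realM.
Qed.

Lemma cont_complexN g : cont_complex g -> cont_complex (fun p => - g p).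
Proof.
move=> g_cont; apply: (cont_complex_ext (g := fun p => (-1)%:C * g p)).
  by move=> p; rewrite rmorphN1 mulN1r.
by apply: cont_complexM => //; apply: cont_complex_cst.
Qed.

Lemma cont_complex_conj g : cont_complex g -> cont_complex (fun p => (g p)^*%R).
Proof.
move=> [g1 g2]; split; first by apply: (cont_real_ext _ g1) => p; case: (g p).
by apply: (cont_real_ext _ (cont_realN g2)) => p; case: (g p).
Qed.

Lemma cont_complex_sum J (r : seq J) (Q : pred J) (F : J -> (I -> R) -> C) :
  (forall j, cont_complex (F j)) -> cont_complex (fun p => \sum_(j <- r | Q j) F j p).
Proof.
move=> F_cont; split.
  apply: (cont_real_ext (g := fun p => \sum_(j <- r | Q j) complex.Re (F j p))).
    by move=> p; rewrite Re_sum.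
  by apply: cont_real_sum => j; case: (F_cont j).
apply: (cont_real_ext (g := fun p => \sum_(j <- r | Q j) complex.Im (F j p))).
  by move=> p; rewrite Im_sum.
by apply: cont_real_sum => j; case: (F_cont j).
Qed.

Lemma cont_mx_cst a b (M : 'M[C]_(a, b)) : cont_mx (fun _ => M).
Proof. by move=> i j; apply: cont_complex_cst. Qed.

Lemma cont_mx_mul a b c (F : (I -> R) -> 'M[C]_(a, b)) (G : (I -> R) -> 'M[C]_(b, c)) :
  cont_mx F -> cont_mx G -> cont_mx (fun p => F p *m G p).
Proof.
move=> F_cont G_cont i j; apply: (cont_complex_ext (g := fun p => \sum_k F p i k * G p k j)).
  by move=> p; rewrite mxE.
by apply: cont_complex_sum => k; apply: cont_complexM.
Qed.

Lemma cont_mx_trC a b (F : (I -> R) -> 'M[C]_(a, b)) : cont_mx F -> cont_mx (fun p => (F p)^t*).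
Proof.
move=> F_cont i j; apply: (cont_complex_ext (g := fun p => (F p j i)^*%R)).
  by move=> p; rewrite !mxE.
exact: cont_complex_conj.
Qed.

Lemma cont_mxZ a b g (F : (I -> R) -> 'M[C]_(a, b)) :
  cont_complex g -> cont_mx F -> cont_mx (fun p => g p *: F p).
Proof.
move=> g_cont F_cont i j; apply: (cont_complex_ext (g := fun p => g p * F p i j)).
  by move=> p; rewrite !mxE.
exact: cont_complexM.
Qed.

Lemma cont_mx_sum a b J (r : seq J) (Q : pred J) (F : J -> (I -> R) -> 'M[C]_(a, b)) :
  (forall j, cont_mx (F j)) -> cont_mx (fun p => \sum_(j <- r | Q j) F j p).
Proof.
move=> F_cont i k; apply: (cont_complex_ext (g := fun p => \sum_(j <- r | Q j) F j p i k)).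
  by move=> p; rewrite summxE.
by apply: cont_complex_sum => j; apply: F_cont.
Qed.

Lemma closed_forall J (A : J -> set P) :
  (forall j, closed (A j)) -> closed [set p : P | forall j, A j p].
Proof.
move=> A_closed; rewrite (_ : [set p | _] = \bigcap_(j in setT) A j).
  by apply: closed_bigI => j _.
by apply/seteqP; split=> p /= Ap j //; apply: Ap.
Qed.

Lemma closed_implies (H : Prop) (A : set P) : closed A -> closed [set p | H -> A p].
Proof.
move=> A_closed; have [h|nh] := pselect H.
  by rewrite (_ : [set p | H -> A p] = A) //; apply/seteqP; split=> p /=; auto.
rewrite (_ : [set p | H -> A p] = setT); first exact: closedT.
by apply/seteqP; split=> // p _ /nh.
Qed.

Lemma closed_le_real g h : cont_real g -> cont_real h -> closed [set p : P | g p <= h p].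
Proof.
move=> g_cont h_cont.
rewrite (_ : [set p | _] = (fun p => h p - g p) @^-1` [set x : R | 0 <= x]).
  apply: preimage_closed; last exact: closed_ge.
  by move=> x _; apply: cont_realD => //; apply: cont_realN.
by apply/seteqP; split=> p /=; rewrite subr_ge0.
Qed.

Lemma closed_eq_real g h : cont_real g -> cont_real h -> closed [set p : P | g p = h p].
Proof.
move=> g_cont h_cont; rewrite (_ : [set p | _] = [set p | g p <= h p] `&` [set p | h p <= g p]).
  by apply: closedI; apply: closed_le_real.
apply/seteqP; split=> p /=; first by move=> ->; rewrite lexx.
by case=> *; apply/eqP; rewrite eq_le; apply/andP.
Qed.

Lemma closed_eq_complex g h :
  cont_complex g -> cont_complex h -> closed [set p : P | g p = h p].
Proof.
move=> [g1 g2] [h1 h2].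
rewrite (_ : [set p | _] = [set p | complex.Re (g p) = complex.Re (h p)]
    `&` [set p | complex.Im (g p) = complex.Im (h p)]).
  by apply: closedI; apply: closed_eq_real.
apply/seteqP; split=> p /=; first by move=> ->.
by case: (g p) (h p) => [? ?] [? ?] /= [-> ->].
Qed.

Lemma closed_eq_mx a b (F G : (I -> R) -> 'M[C]_(a, b)) :
  cont_mx F -> cont_mx G -> closed [set p : P | F p = G p].
Proof.
move=> F_cont G_cont; rewrite (_ : [set p | _] = [set p | forall i j, F p i j = G p i j]).
  apply: closed_forall => i; apply: closed_forall => j; exact: closed_eq_complex.
by apply/seteqP; split=> p /=; [move=> -> | move=> FG; apply/matrixP].
Qed.

End Continuity.

Section CompactZero.
Variables (R : realType) (T : topologicalType).
Local Open Scope classical_set_scope.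

(* Cluster point of the filter of approximate zeros. *)
Lemma compact_approx_zero J (S : set T) (g : J -> T -> R) :
  compact S -> (forall j, continuous (g j)) ->
  (forall e, 0 < e -> exists2 p, S p & forall j, `|g j p| <= e) ->
  exists2 p, S p & forall j, g j p = 0.
Proof.
move=> S_compact g_cont approx.
pose A e := [set p | S p /\ forall j, `|g j p| <= e].
have A_filter : Filter (filter_from [set e : R | 0 < e] A).
  apply: filter_from_filter => [|e1 e2 e1_gt0 e2_gt0]; first by exists 1; rewrite /= ltr01.
  exists (Num.min e1 e2) => [|p [Sp gp]]; first by rewrite /= lt_min e1_gt0.
  by split; split=> // j; apply: le_trans (gp j) _; rewrite ge_min lexx ?orbT.
have A_proper : ProperFilter (filter_from [set e : R | 0 < e] A).
  by apply: filter_from_proper => e /approx [p Sp gp]; exists p.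
have [p [Sp p_cluster]] : S `&` cluster (filter_from [set e : R | 0 < e] A) !=set0.
  by apply: S_compact; exists 1 => [|p []] //=; rewrite ltr01.
exists p => // j; apply/eqP; rewrite -normr_le0; apply/ler_addgt0Pr => e e_gt0.
rewrite add0r.
have Z_closed : closed (g j @^-1` ([set x | - e <= x] `&` [set x | x <= e])).
  apply: preimage_closed => [x _|]; first exact: g_cont.
  by apply: closedI; [exact: closed_ge | exact: closed_le].
suff /Z_closed [/= ? ?] : closure (g j @^-1` ([set x | - e <= x] `&` [set x | x <= e])) p.
  by rewrite ler_norml; apply/andP.
move=> B /(p_cluster (A e)) [|q [[_ gq] Bq]]; first by exists e.
by exists q; split=> //=; move: (gq j); rewrite ler_norml => /andP.
Qed.

End CompactZero.

Section EntryBounds.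
Variable R : realType.
Local Notation C := R[i].

Lemma normc_ge_Im (x : C) : `|complex.Im x|%:C <= `|x|.
Proof. by case: x => a b; simpc; rewrite -sqrtr_sqr ler_wsqrtr // lerDr sqr_ge0. Qed.

Lemma Re_Im_le1 (x : C) : `|x| <= 1 -> `|complex.Re x| <= 1 /\ `|complex.Im x| <= 1.
Proof.
move=> x_le1; rewrite -!lecR.
by split; apply: le_trans x_le1; [apply: normc_ge_Re | apply: normc_ge_Im].
Qed.

Lemma unitarymx_entry_le1 p (U : 'M[C]_p) : U \is unitarymx -> forall a b, `|U a b| <= 1.
Proof.
move=> /unitarymxP U1 a b; have := @vnorm2_entry_le1 _ _ (row a U)^T _ b; rewrite !mxE; apply.
have := congr1 (fun M : 'M[C]_p => M a a) U1; rewrite !mxE eqxx mulr1n => <-.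
by rewrite vnorm2E; apply: eq_bigr => k _; rewrite !mxE.
Qed.

(* [s_j = (U^* A V)_jj] is a sum of [p q] products of entries of modulus at most one. *)
Lemma singular_value_le p q (A : 'M[C]_(p, q)) s U V :
  U \is unitarymx -> V \is unitarymx -> A = U *m sv_diag p q s *m V^t* ->
  (forall a b, `|A a b| <= 1) -> (forall j, 0 <= s j) ->
  forall j, (j < minn p q)%N -> s j <= (p * q)%:R.
Proof.
move=> U_unitary V_unitary AE A_le1 s_ge0 j; rewrite leq_min => /andP[jp jq].
have sjE : (s j)%:C = (U^t* *m A *m V) (Ordinal jp) (Ordinal jq).
  move: U_unitary V_unitary => /unitarymxP/mulmx1C U1 /unitarymxP/mulmx1C V1.
  by rewrite AE !mulmxA U1 mul1mx -mulmxA V1 mulmx1 mxE eqxx.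
rewrite -lecR -[X in X <= _](ger0_norm (x := (s j)%:C)); last by rewrite lecR.
rewrite sjE mxE.
have -> : ((p * q)%:R)%:C = \sum_(b < q) \sum_(a < p) (1 : C).
  by rewrite !sumr_const !card_ord -mulrnA mulnC rmorph_nat.
apply: le_trans (ler_norm_sum _ _ _) _; apply: ler_sum => b _; rewrite normrM.
apply: le_trans (_ : `|(U^t* *m A) (Ordinal jp) b| * 1 <= _).
  by rewrite ler_wpM2l ?unitarymx_entry_le1.
rewrite mulr1 mxE; apply: le_trans (ler_norm_sum _ _ _) _; apply: ler_sum => a _.
rewrite normrM mxE norm_conjC mxE.
by apply: mulr_ile1; rewrite ?normr_ge0 ?unitarymx_entry_le1 ?A_le1.
Qed.

End EntryBounds.

Section Parametrization.
Variables (R : realType) (n m : nat) (alpha : R) (D : nat).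
Local Notation C := R[i].
Local Notation d := (minn n m).
Local Open Scope classical_set_scope.

(* A point [p : coord -> R] lists, for each of [D] terms [l], the real ([true]) and
   imaginary ([false]) parts of the entries of two unitaries [U_l] and [V_l], the [d]
   singular values [s_l] and the weight [t_l] of the term
   [t_l psi_l psi_l^*] with [coef_mx psi_l = U_l diag(s_l) V_l^*]. *)
Local Notation coord :=
  ('I_D * ((('I_n * 'I_n * bool) + ('I_m * 'I_m * bool)) + ('I_d + unit)))%type.
Local Notation P := (prod_topology (fun _ : coord => R)).

Definition param_weight (p : coord -> R) l := p (l, inr (inr tt)).

Definition param_U (p : coord -> R) l : 'M[C]_n :=
  \matrix_(a, b) Complex (p (l, inl (inl (a, b, true)))) (p (l, inl (inl (a, b, false)))).

Definition param_V (p : coord -> R) l : 'M[C]_m :=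
  \matrix_(a, b) Complex (p (l, inl (inr (a, b, true)))) (p (l, inl (inr (a, b, false)))).

Definition param_sv (p : coord -> R) l (j : nat) : R :=
  \sum_(i < d | i == j :> nat) p (l, inr (inl i)).

Definition param_vec (p : coord -> R) l : 'cV[C]_(n * m) :=
  coef_vec (param_U p l *m sv_diag n m (param_sv p l) *m (param_V p l)^t*).

Definition param_comb (p : coord -> R) := outer_comb (param_weight p) (param_vec p).

Definition param_valid (p : coord -> R) l : Prop :=
  0 <= param_weight p l /\
  param_U p l *m (param_U p l)^t* = 1%:M /\
  param_V p l *m (param_V p l)^t* = 1%:M /\
  (forall i j : nat, (i <= j)%N -> param_sv p l j <= param_sv p l i) /\
  (forall j, 0 <= param_sv p l j) /\
  admissible_seq alpha (param_sv p l) /\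
  vnorm2 (param_vec p l) = 1.

Lemma param_sv_eq0 p l j : (d <= j)%N -> param_sv p l j = 0.
Proof.
by move=> le_dj; rewrite /param_sv big1 // => i /eqP ij; move: (ltn_ord i); rewrite ij ltnNge le_dj.
Qed.

Lemma param_valid_V_alpha p l : param_valid p l -> V_alpha alpha (param_vec p l).
Proof.
case=> _ [U1 [V1 [sv_dec [sv_ge0 [adm unit]]]]]; split=> //.
exists (param_sv p l); split=> //; apply/singular_valuesP; split=> //.
  exact: param_sv_eq0.
exists (param_U p l), (param_V p l); split; [exact/unitarymxP | exact/unitarymxP |].
exact: coef_mx_vec.
Qed.

Lemma cont_real_param_sv l j : cont_real (fun p : coord -> R => param_sv p l j).
Proof. by apply: cont_real_sum => i; apply: cont_real_proj. Qed.

Lemma cont_mx_param_U l : cont_mx (fun p : coord -> R => param_U p l).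
Proof.
move=> a b; apply: (cont_complex_ext (g := fun p : coord -> R =>
  Complex (p (l, inl (inl (a, b, true)))) (p (l, inl (inl (a, b, false)))))).
  by move=> p; rewrite mxE.
by apply: cont_complex_pair; apply: cont_real_proj.
Qed.

Lemma cont_mx_param_V l : cont_mx (fun p : coord -> R => param_V p l).
Proof.
move=> a b; apply: (cont_complex_ext (g := fun p : coord -> R =>
  Complex (p (l, inl (inr (a, b, true)))) (p (l, inl (inr (a, b, false)))))).
  by move=> p; rewrite mxE.
by apply: cont_complex_pair; apply: cont_real_proj.
Qed.

Lemma cont_mx_param_vec l : cont_mx (fun p : coord -> R => param_vec p l).
Proof.
have diag_cont : cont_mx (fun p : coord -> R => sv_diag n m (param_sv p l)).
  move=> i j; apply: (cont_complex_ext (g := fun p : coord -> R =>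
    if i == j :> nat then (param_sv p l i)%:C else 0)); first by move=> p; rewrite mxE.
  by case: (i == j :> nat); [apply/cont_complex_real/cont_real_param_sv | apply: cont_complex_cst].
have M_cont : cont_mx (fun p : coord -> R =>
    param_U p l *m sv_diag n m (param_sv p l) *m (param_V p l)^t*).
  apply: cont_mx_mul; last exact/cont_mx_trC/cont_mx_param_V.
  by apply: cont_mx_mul; [exact: cont_mx_param_U | exact: diag_cont].
move=> k j; apply: (cont_complex_ext _ (M_cont (mxtens_unindex k).1 (mxtens_unindex k).2)).
by move=> p; rewrite /param_vec /coef_vec [RHS]mxE.
Qed.

Lemma cont_mx_param_comb : cont_mx param_comb.
Proof.
apply: cont_mx_sum => l; apply: cont_mxZ; first exact/cont_complex_real/cont_real_proj.
by apply: cont_mx_mul; [|apply: cont_mx_trC]; apply: cont_mx_param_vec.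
Qed.

Lemma closed_param_valid l : closed [set p : P | param_valid p l].
Proof.
have sv_cont j : cont_real (fun p : coord -> R => param_sv p l j) := @cont_real_param_sv l j.
apply: closedI; first by apply: closed_le_real; [apply: cont_real_cst | apply: cont_real_proj].
apply: closedI.
  apply: closed_eq_mx; last exact: cont_mx_cst.
  by apply: cont_mx_mul; [|apply: cont_mx_trC]; apply: cont_mx_param_U.
apply: closedI.
  apply: closed_eq_mx; last exact: cont_mx_cst.
  by apply: cont_mx_mul; [|apply: cont_mx_trC]; apply: cont_mx_param_V.
apply: closedI.
  apply: closed_forall => i; apply: closed_forall => j.
  by apply: closed_implies; apply: closed_le_real.
apply: closedI.
  by apply: closed_forall => j; apply: closed_le_real => //; apply: cont_real_cst.
apply: closedI; first apply: closedI.
- apply: closed_forall => j; apply: closed_implies.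
  by apply: closed_eq_real => //; apply: cont_real_cst.
- apply: closed_implies; apply: closed_le_real => //.
  by apply: cont_realM; [apply: cont_real_cst | apply: cont_real_sum].
apply: closed_eq_complex; last exact: cont_complex_cst.
apply: (cont_complex_ext (g := fun p : coord -> R => ((param_vec p l)^t* *m param_vec p l) 0 0)).
  by [].
by apply: cont_mx_mul; [apply: cont_mx_trC|]; apply: cont_mx_param_vec.
Qed.

Lemma param_of_outer_comb (t : 'I_D -> R) (psi : 'I_D -> 'cV[C]_(n * m)) (b : R) :
  0 <= b -> (forall l, 0 <= t l <= b) -> (forall l, V_alpha alpha (psi l)) ->
  exists p : coord -> R, [/\ forall l, param_valid p l, param_comb p = outer_comb t psi &
    forall x, `|p x| <= b + (n * m)%:R + 1].
Proof.
move=> b_ge0 t_b psi_V.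
have svd l : exists x : (nat -> R) * ('M[C]_n * 'M[C]_m),
    [/\ singular_values (coef_mx (psi l)) x.1, admissible_seq alpha x.1,
        x.2.1 \is unitarymx, x.2.2 \is unitarymx &
        coef_mx (psi l) = x.2.1 *m sv_diag n m x.1 *m x.2.2^t*].
  have [_ [s [s_psi adm_s]]] := psi_V l.
  by have /singular_valuesP[_ _ _ [U [V [? ? ?]]]] := s_psi; exists (s, (U, V)).
have [f fP] := choice svd.
pose p (x : coord) : R := match x with
  | (l, inl (inl (a, c, re))) =>
      if re then complex.Re ((f l).2.1 a c) else complex.Im ((f l).2.1 a c)
  | (l, inl (inr (a, c, re))) =>
      if re then complex.Re ((f l).2.2 a c) else complex.Im ((f l).2.2 a c)
  | (l, inr (inl i)) => (f l).1 i
  | (l, inr (inr _)) => t l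
  end.
have pU l : param_U p l = (f l).2.1 by apply/matrixP => a c; rewrite mxE /=; case: ((f l).2.1 a c).
have pV l : param_V p l = (f l).2.2 by apply/matrixP => a c; rewrite mxE /=; case: ((f l).2.2 a c).
have psv l : param_sv p l = (f l).1.
  apply: funext => j; have [/singular_valuesP[_ _ s_eq0 _] _ _ _ _] := fP l.
  have [lt_jd|le_dj] := ltnP j d; last by rewrite param_sv_eq0 // s_eq0.
  by rewrite /param_sv (big_pred1 (Ordinal lt_jd)).
have pvec l : param_vec p l = psi l.
  by rewrite /param_vec pU pV psv; have [_ _ _ _ <-] := fP l; apply: coef_vec_mx.
exists p; split=> [l||].
- have [/singular_valuesP[s_dec s_ge0 _ _] adm U_unitary V_unitary _] := fP l.
  have [t_ge0 _] := andP (t_b l); have [unit_psi _] := psi_V l.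
  by rewrite /param_valid pU pV psv pvec; do !split=> //; apply/unitarymxP.
- by apply: eq_bigr => l _; rewrite pvec.
have le1 : 1 <= b + (n * m)%:R + 1 by rewrite lerDr addr_ge0.
case=> l x; have [/singular_valuesP[_ s_ge0 _ _] _ U_unitary V_unitary fE] := fP l.
case: x => [[[[a c] []]|[[a c] []]]|[i|[]]] /=.
1,2: by apply: le_trans le1; case: (Re_Im_le1 (unitarymx_entry_le1 U_unitary a c)).
1,2: by apply: le_trans le1; case: (Re_Im_le1 (unitarymx_entry_le1 V_unitary a c)).
  have coef_le1 a c : `|coef_mx (psi l) a c| <= 1.
    by rewrite mxE; apply: vnorm2_entry_le1; case: (psi_V l).
  rewrite ger0_norm //; apply: le_trans (singular_value_le U_unitary V_unitary fE _ _ _) _ => //.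
  by rewrite -addrA addrCA lerDl addr_ge0.
have /andP[t_ge0 t_le_b] := t_b l.
by rewrite ger0_norm //; apply: le_trans t_le_b _; rewrite -addrA lerDl addr_ge0.
Qed.

End Parametrization.

Section Closedness.
Variables (R : realType) (n m : nat) (alpha : R).
Hypotheses (n_gt0 : (0 < n)%N) (m_gt0 : (0 < m)%N) (alpha_ge1 : 1 <= alpha).
Local Notation C := R[i].
Local Notation NN := (n * m)%N.
Local Open Scope classical_set_scope.

Lemma cone_alpha_outer_comb (Y : 'M[C]_NN) : cone_alpha alpha Y ->
  exists (t : 'I_(NN * NN) -> R) (psi : 'I_(NN * NN) -> 'cV[C]_NN),
    [/\ forall l, 0 <= t l <= complex.Re (\tr Y), forall l, V_alpha alpha (psi l) &
        Y = outer_comb t psi].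
Proof.
move=> [N [t [psi [t_ge0 [psi_V YE]]]]]; rewrite (YE : Y = outer_comb t psi).
have [N' [t' [psi' [le_N' t'_ge0 psi'_V ->]]]] := outer_comb_caratheodory t_ge0 psi_V.
have [t'' [psi'' [t''_ge0 psi''_V ->]]] :=
  outer_comb_widen le_N' (V_alpha_basis n_gt0 m_gt0 alpha_ge1) t'_ge0 psi'_V.
exists t'', psi''; split=> // l; rewrite t''_ge0 /=.
rewrite mxtrace_outer_comb => [|l']; last by case: (psi''_V l').
by rewrite /= (bigD1 l) //= lerDl sumr_ge0.
Qed.

Lemma near_mxtrace_Re_le (X Y : 'M[C]_NN) :
  (forall k, `|complex.Re (X k k - Y k k)| < 1) ->
  complex.Re (\tr Y) <= `|complex.Re (\tr X)| + NN%:R.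
Proof.
move=> XY; rewrite /mxtrace Re_sum.
apply: le_trans (_ : \sum_k (complex.Re (X k k) + 1) <= _).
  by apply: ler_sum => k _; move: (XY k); rewrite Re_sub ltr_norml => /andP[? _]; lra.
by rewrite big_split sumr_const card_ord /= -Re_sum lerD2r real_ler_norm ?num_real.
Qed.

Local Notation coord := ('I_(NN * NN) *
  ((('I_n * 'I_n * bool) + ('I_m * 'I_m * bool)) + ('I_(minn n m) + unit)))%type.

(* A cluster point of parametrizations of cone elements converging to [X]. *)
Lemma K_alpha_outer_comb (X : 'M[C]_NN) : K_alpha alpha X ->
  exists (t : 'I_(NN * NN) -> R) (psi : 'I_(NN * NN) -> 'cV[C]_NN),
    [/\ forall l, 0 <= t l, forall l, V_alpha alpha (psi l) & X = outer_comb t psi].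
Proof.
move=> XK; pose b := `|complex.Re (\tr X)| + NN%:R; pose box := b + NN%:R + 1.
pose S := [set p : prod_topology (fun _ : coord => R) | forall x, `[- box, box] (p x)]
  `&` [set p | forall l, param_valid alpha p l].
pose g (j : 'I_NN * 'I_NN * bool) (p : coord -> R) :=
  if j.2 then complex.Re (X j.1.1 j.1.2 - param_comb p j.1.1 j.1.2)
  else complex.Im (X j.1.1 j.1.2 - param_comb p j.1.1 j.1.2).
have [p [_ p_valid] g0] : exists2 p, S p & forall j, g j p = 0.
  apply: compact_approx_zero.
  - apply: compact_closedI.
      exact: (@tychonoff coord (fun _ => R) (fun _ => `[- box, box]%classic)
        (fun _ => @segment_compact R (- box) box)).
    by apply: closed_forall => l; apply: closed_param_valid.
  - move=> [[i k] re]; have [] : cont_complex (fun p : coord -> R => X i k - param_comb p i k).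
      by apply: cont_complexD; [apply: cont_complex_cst | apply/cont_complexN/cont_mx_param_comb].
    by case: re.
  move=> e e_gt0; have e1_gt0 : 0 < Num.min e 1 by rewrite lt_min e_gt0 ltr01.
  have [Y [YK XY]] := XK _ e1_gt0.
  have ReXY k1 k2 : `|complex.Re (X k1 k2 - Y k1 k2)| < Num.min e 1.
    by rewrite -ltcR (le_lt_trans (normc_ge_Re _)).
  have ImXY k1 k2 : `|complex.Im (X k1 k2 - Y k1 k2)| < Num.min e 1.
    by rewrite -ltcR (le_lt_trans (normc_ge_Im _)).
  have [t [psi [t_b psi_V YE]]] := cone_alpha_outer_comb YK.
  have trY : complex.Re (\tr Y) <= b.
    apply: near_mxtrace_Re_le => k; apply: lt_le_trans (ReXY k k) _.
    by rewrite ge_min lexx orbT.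
  have b_ge0 : 0 <= b by rewrite addr_ge0.
  have t_le_b l : 0 <= t l <= b by have /andP[-> /le_trans ->] := t_b l.
  have [p [p_valid pE p_box]] := param_of_outer_comb b_ge0 t_le_b psi_V.
  exists p; first by split=> // x; rewrite /= in_itv /= -ler_norml.
  move=> [[i k] re]; rewrite /g pE -YE; apply: ltW.
  by case: re; [apply: lt_le_trans (ReXY i k) _ | apply: lt_le_trans (ImXY i k) _];
    rewrite ge_min lexx.
exists (param_weight p), (param_vec p); split=> [l|l|]; first by case: (p_valid l).
  exact: param_valid_V_alpha.
apply/matrixP => i k; apply/eqP; rewrite -subr_eq0 eq_complex.
by move: (g0 (i, k, true)) (g0 (i, k, false)); rewrite /g /= => -> ->; rewrite eqxx.
Qed.

End Closedness.

Lemma cone_alpha_K_alpha (R : realType) (n m : nat) (alpha : R) (X : 'M[R[i]]_(n * m)) :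
  cone_alpha alpha X -> K_alpha alpha X.
Proof. by move=> X_cone e e_gt0; exists X; split=> // i j; rewrite subrr normr0 ltcR. Qed.

Theorem theorem3p19 (R : realType) (n m : nat) (alpha : R)
  (halpha : 1 <= alpha <= (minn n m)%:R)
  (Phi : {linear 'M[R[i]]_n -> 'M[R[i]]_m}) :
  [/\
   (* (i) <-> (ii) *)
   K_alpha alpha (choi Phi) <->
     (exists (N : nat) (A : 'I_N -> 'M[R[i]]_(m, n)),
        (forall l, admissible_mx alpha (A l)) /\
        forall X : 'M[R[i]]_n, Phi X = \sum_(l < N) A l *m X *m (A l) ^t*),
   (* (i) <-> (iii) *)
   K_alpha alpha (choi Phi) <->
     (exists (N : nat) (psi : 'I_N -> 'cV[R[i]]_(n * m)) (t : 'I_N -> R),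
        (forall l, V_alpha alpha (psi l)) /\ (forall l, 0 < t l) /\
        choi Phi = \sum_(l < N) (t l)%:C *: (psi l *m (psi l) ^t*))
   & (* moreover, N <= (nm)^2 can be achieved in (iii) *)
   K_alpha alpha (choi Phi) ->
     (exists (N : nat) (psi : 'I_N -> 'cV[R[i]]_(n * m)) (t : 'I_N -> R),
        (N <= (n * m) ^ 2)%N /\
        (forall l, V_alpha alpha (psi l)) /\ (forall l, 0 < t l) /\
        choi Phi = \sum_(l < N) (t l)%:C *: (psi l *m (psi l) ^t*))].
Proof.
have /andP[alpha_ge1 alpha_le_d] := halpha.
have /andP[n_gt0 m_gt0] : (0 < n)%N && (0 < m)%N.
  by rewrite -leq_min -(@ler1n R) (le_trans alpha_ge1).
have i_iii : K_alpha alpha (choi Phi) ->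
    exists N (psi : 'I_N -> 'cV[R[i]]_(n * m)) (t : 'I_N -> R), (N <= (n * m) ^ 2)%N /\
      (forall l, V_alpha alpha (psi l)) /\ (forall l, 0 < t l) /\ choi Phi = outer_comb t psi.
  move=> /(K_alpha_outer_comb n_gt0 m_gt0 alpha_ge1) [t [psi [t_ge0 psi_V ->]]].
  have [N [t' [psi' [le_N t'_gt0 psi'_V ->]]]] := outer_comb_pos t_ge0 psi_V.
  by exists N, psi', t'; rewrite expnS expn1.
have iii_i (N : nat) (psi : 'I_N -> 'cV[R[i]]_(n * m)) (t : 'I_N -> R) :
    (forall l, V_alpha alpha (psi l)) -> (forall l, 0 < t l) ->
    choi Phi = outer_comb t psi -> K_alpha alpha (choi Phi).
  move=> psi_V t_gt0 ->; apply: cone_alpha_K_alpha.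
  by exists N, t, psi; split=> // l; apply: ltW.
split; [split|split|exact: i_iii].
- move=> /i_iii [N [psi [t [_ [psi_V [t_gt0 choi_comb]]]]]].
  exact: outer_comb_choi_kraus psi_V t_gt0 choi_comb.
- move=> [N [A [A_adm PhiE]]].
  have [N' [psi [t [psi_V t_gt0 choi_comb]]]] :=
    kraus_choi_outer_comb (V_alpha_basis n_gt0 m_gt0 alpha_ge1) A_adm PhiE.
  exact: iii_i psi_V t_gt0 choi_comb.
- by move=> /i_iii [N [psi [t [_ ?]]]]; exists N, psi, t.
- by move=> [N [psi [t [psi_V [t_gt0 choi_comb]]]]]; apply: iii_i psi_V t_gt0 choi_comb.
Qed.
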